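(* Assume complete randomization, let $\mathcal Q_{\mathrm U}=\{q:N_q=1\}$ with $N_{\mathrm U}=|\mathcal Q_{\mathrm U}|$, and let $\{\langle g\rangle\}_{g=1}^G$ be a grouping of $\mathcal Q_{\mathrm U}$. Assume Conditions 3 and 6. Let $(w_q)_{q\in\mathcal Q_{\mathrm U}}$ be reals with $\max_q|w_q|\le\overline w$ and $\hat v=\sum_{g=1}^G\sum_{q\in\langle g\rangle}w_q(Y_q-\hat Y_{\langle g\rangle})^2$. There is a universal constant $C>0$ such that for all $t>0$, $$\mathbb P\{|\hat v-\mathbb E\hat v|\ge t\}\le\frac{C\overline w^2(\Delta^4+\Delta^2\zeta^2)N_{\mathrm U}}{t^2}.$$
   Context: Randomization model: $N$ units, $Q$ treatment levels, group sizes $N_1,\dots,N_Q\ge1$ with $\sum_qN_q=N$; unit $i$ has fixed real potential outcomes $Y_i(q)$. Under complete randomization $Z$ is uniform over all vectors in $[Q]^N$ with exactly $N_q$ coordinates equal to $q$; $Y_i=Y_i(Z_i)$. For $q$ with $N_q=1$, $Y_q$ denotes the observed outcome of the unit assigned to $q$. $\overline Y(q)=N^{-1}\sum_iY_i(q)$. Grouping: a fixed (data-independent) partition $\mathcal Q_{\mathrm U}=\bigcup_{g=1}^G\langle g\rangle$ into disjoint groups with $|\langle g\rangle|\ge2$; $\hat Y_{\langle g\rangle}=|\langle g\rangle|^{-1}\sum_{q\in\langle g\rangle}Y_q$, $\overline Y_{\langle g\rangle}=|\langle g\rangle|^{-1}\sum_{q\in\langle g\rangle}\overline Y(q)$. Condition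 3: $\max_qN^{-1}\sum_i\{Y_i(q)-\overline Y(q)\}^4\le\Delta^4$. Condition 6: $\max_g\max_{q\in\langle g\rangle}|\overline Y(q)-\overline Y_{\langle g\rangle}|\le\zeta$. *)

From HB Require Import structures.
From mathcomp Require Import all_boot all_order all_algebra.
From mathcomp Require Import Rstruct.
Set Implicit Arguments. Unset Strict Implicit. Unset Printing Implicit Defensive.
Import Order.TTheory GRing.Theory Num.Theory.
Local Open Scope ring_scope.

Notation R := Rdefinitions.R.

Section Defs.
Variables (n Q : nat).

Definition assignment := {ffun 'I_n -> 'I_Q}.

Definition CR_support (Nq : 'I_Q -> nat) : {set assignment} :=
  [set z : assignment | [forall q : 'I_Q, #|[set i | z i == q]| == Nq q]].

Definition Prob (Om : {set assignment}) (E : pred assignment) : R :=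
  #|[set z in Om | E z]|%:R / #|Om|%:R.
Definition Expect (Om : {set assignment}) (f : assignment -> R) : R :=
  (\sum_(z in Om) f z) / #|Om|%:R.

(* potential outcomes Y i q = Y_i(q) *)
Definition Ybar (Y : 'I_n -> 'I_Q -> R) (q : 'I_Q) : R :=
  (n%:R)^-1 * \sum_(i < n) Y i q.

Definition QU (Nq : 'I_Q -> nat) : {set 'I_Q} := [set q | Nq q == 1%N].

(* observed outcome of the (unique, when N_q = 1) unit assigned to q *)
Definition Yobs (Y : 'I_n -> 'I_Q -> R) (z : assignment) (q : 'I_Q) : R :=
  \sum_(i < n | z i == q) Y i q.

Definition Yhat_grp (Y : 'I_n -> 'I_Q -> R) (B : {set 'I_Q}) (z : assignment) : R :=
  (#|B|%:R)^-1 * \sum_(q in B) Yobs Y z q.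

Definition Ybar_grp (Y : 'I_n -> 'I_Q -> R) (B : {set 'I_Q}) : R :=
  (#|B|%:R)^-1 * \sum_(q in B) Ybar Y q.

Definition vhat (P : {set {set 'I_Q}}) (w : 'I_Q -> R) (Y : 'I_n -> 'I_Q -> R)
  (z : assignment) : R :=
  \sum_(B in P) \sum_(q in B) w q * (Yobs Y z q - Yhat_grp Y B z) ^+ 2.

End Defs.
Arguments CR_support {n Q} Nq.
Arguments Prob {n Q} Om E.
Arguments Expect {n Q} Om f.
Arguments Ybar {n Q} Y q.
Arguments QU {Q} Nq.
Arguments Yobs {n Q} Y z q.
Arguments Yhat_grp {n Q} Y B z.
Arguments Ybar_grp {n Q} Y B.
Arguments vhat {n Q} P w Y z.

(* The estimator depends on the assignment only through the units receiving the
   singleton levels of Q_U.  Revealing these units one level at a time gives a Doob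
   martingale, so the variance of vhat is the sum of the expected squared increments, and
   by Cauchy-Schwarz each increment is dominated by the mean squared change of vhat when
   one level is moved to another free unit (an Efron-Stein type bound for complete
   randomization).  Such a move changes the observed outcomes of at most two levels, and
   the first order expansion of the weighted within-group sum of squares bounds the change
   by wbar^2 times fourth and second moments of the centred outcomes, the group means
   being shifted by at most zeta (Condition 6).  Averaging over the randomization turns
   these into population moments, which Condition 3 bounds by 2 Delta^4 + zeta^2 Delta^2.
   Chebyshev's inequality concludes, with C = 3840. *)

From HB Require Import structures.
From mathcomp Require Import all_boot all_order all_algebra.
From mathcomp Require Import fingroup perm Rstruct ring lra.
Set Implicit Arguments. Unset Strict Implicit. Unset Printing Implicit Defensive.
Import Order.TTheory GRing.Theory Num.Theory.
Local Open Scope ring_scope.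

Section RealFieldInequalities.
Variable T : realFieldType.

Lemma sqr_sum_le (I : finType) (A : {pred I}) (v : I -> T) :
  (\sum_(i in A) v i) ^+ 2 <= #|A|%:R * \sum_(i in A) v i ^+ 2.
Proof.
have expand : \sum_(i in A) \sum_(j in A) (v i - v j) ^+ 2 =
    2 * (#|A|%:R * \sum_(i in A) v i ^+ 2 - (\sum_(i in A) v i) ^+ 2).
  have -> : \sum_(i in A) \sum_(j in A) (v i - v j) ^+ 2 =
      \sum_(i in A) \sum_(j in A) v i ^+ 2 + \sum_(i in A) \sum_(j in A) v j ^+ 2
      - 2 * \sum_(i in A) \sum_(j in A) v i * v j.
    rewrite mulr_sumr -!big_split -sumrB /=; apply: eq_bigr => i _.
    rewrite mulr_sumr -!big_split -sumrB /=; apply: eq_bigr => j _; ring.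
  have -> : \sum_(i in A) \sum_(j in A) v i ^+ 2 = #|A|%:R * \sum_(i in A) v i ^+ 2.
    by rewrite mulr_sumr; apply: eq_bigr => i _; rewrite sumr_const mulr_natl.
  have -> : \sum_(i in A) \sum_(j in A) v i * v j = (\sum_(i in A) v i) ^+ 2.
    by rewrite expr2 mulr_suml; apply: eq_bigr => i _; rewrite mulr_sumr.
  rewrite sumr_const -mulr_natl; ring.
have : 0 <= \sum_(i in A) \sum_(j in A) (v i - v j) ^+ 2.
  by apply: sumr_ge0 => i _; apply: sumr_ge0 => j _; exact: sqr_ge0.
by rewrite expand pmulr_rge0 // subr_ge0.
Qed.

Lemma sqr_le_of_norm_le (a b : T) : `|a| <= b -> a ^+ 2 <= b ^+ 2.
Proof.
move=> le_ab; have b_ge0 : 0 <= b by apply: le_trans le_ab.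
by rewrite -real_normK ?num_real // ler_sqr ?nnegrE.
Qed.

Lemma sqr_div_le (s x p : T) : 0 < p -> s ^+ 2 <= p * x -> (s / p) ^+ 2 <= x / p.
Proof.
move=> p_gt0 le_s; rewrite expr_div_n ler_pdivrMr ?exprn_gt0 //.
by rewrite [p ^+ 2]expr2 mulrA divfK ?gt_eqF // mulrC.
Qed.

Lemma sqr_sum_supp2_le (I : finType) (A : {pred I}) (v : I -> T) q r :
  q \in A -> (forall i, i \in A -> i != q -> i != r -> v i = 0) ->
  (\sum_(i in A) v i) ^+ 2 <= 2 * v q ^+ 2 + 2 * (if r \in A then v r ^+ 2 else 0).
Proof.
move=> qA v0; rewrite (bigD1 q) //=.
have [rA|rNA] := boolP (r \in A); last first.
  rewrite big1 ?addr0; last first.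
    by move=> i /andP[iA iq]; apply: v0 => //; apply: contraNneq rNA => <-; exact: iA.
  by have := sqr_ge0 (v q); lra.
have [rq|rq] := eqVneq r q.
  subst r; rewrite big1 ?addr0; last by move=> i /andP[iA iq]; exact: (v0 i iA iq iq).
  by have := sqr_ge0 (v q); lra.
rewrite (bigD1 r) /=; last by rewrite rA rq.
rewrite big1 ?addr0; last by move=> i /andP[/andP[iA iq] ir]; exact: v0.
by have := sqr_ge0 (v q - v r); nra.
Qed.

Lemma card_dev_ge_mul_sqr_le (I : finType) (A : {set I}) (f : I -> T) (m t : T) :
  0 < t ->
  #|[set i in A | t <= `|f i - m|]|%:R * t ^+ 2 <= \sum_(i in A) (f i - m) ^+ 2.
Proof.
move=> t_gt0; rewrite (bigID (fun i => t <= `|f i - m|)) /=.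
apply: ler_wpDr; first by apply: sumr_ge0 => i _; exact: sqr_ge0.
rewrite (eq_bigl (fun i => i \in [set i in A | t <= `|f i - m|])); last by move=> i; rewrite inE.
rewrite mulr_natl -sumr_const; apply: ler_sum => i; rewrite inE => /andP[_ le_t].
rewrite -[(f i - m) ^+ 2]real_normK ?num_real //; apply: sqr_le_of_norm_le.
by rewrite (gtr0_norm t_gt0).
Qed.

Lemma mul_div_mul_le (a x y : T) :
  0 <= a -> 0 <= x -> 0 <= y -> a * x / (a * y) <= x / y.
Proof.
move=> a_ge0 x_ge0 y_ge0; have [->|a_neq0] := eqVneq a 0.
  by rewrite !mul0r divr_ge0.
by rewrite invfM mulrACA mulfV // mul1r.
Qed.

End RealFieldInequalities.

Section CompleteRandomization.
Variables (n Q : nat) (Nq : 'I_Q -> nat).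
Local Notation assignment := (assignment n Q).
Local Notation Om := (@CR_support n Q Nq).
Implicit Types (L : {set 'I_Q}) (z : assignment) (f g : assignment -> R).

Lemma mem_CR z : (z \in Om) = [forall q, #|[set i | z i == q]| == Nq q].
Proof. by rewrite inE. Qed.

Definition swap_units z (c a : 'I_n) : assignment := [ffun i => z (tperm c a i)].

Lemma swap_unitsK z c a : swap_units (swap_units z c a) c a = z.
Proof. by apply/ffunP=> i; rewrite !ffunE tpermK. Qed.

Lemma swap_units_inj c a : injective (fun z => swap_units z c a).
Proof. exact: (can_inj (g := fun z => swap_units z c a)) (fun z => swap_unitsK z c a). Qed.

Lemma swap_units_CR z c a : (swap_units z c a \in Om) = (z \in Om).
Proof.
rewrite !mem_CR; apply: eq_forallb => q.
rewrite -(card_preimset [set i | z i == q] (@perm_inj _ (tperm c a))).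
by congr (_ == _); apply: eq_card => i; rewrite !inE ffunE.
Qed.

Lemma QU_level1 q : q \in QU Nq -> Nq q = 1%N.
Proof. by rewrite inE => /eqP. Qed.

Section SingletonLevel.
Variables (z : assignment) (q : 'I_Q).
Hypotheses (zOm : z \in Om) (Nq1 : Nq q = 1%N).

Lemma level1_unit_uniq i j : z i = q -> z j = q -> i = j.
Proof.
move: zOm; rewrite mem_CR => /forallP /(_ q); rewrite Nq1 => /cards1P[x Ex] zi zj.
have : i \in [set k | z k == q] by rewrite inE zi.
have : j \in [set k | z k == q] by rewrite inE zj.
by rewrite Ex !inE => /eqP -> /eqP ->.
Qed.

Lemma level1_unit_exists : exists c, z c = q.
Proof.
move: zOm; rewrite mem_CR => /forallP /(_ q) /eqP card_q.
have : (0 < #|[set k | z k == q]|)%N by rewrite card_q Nq1.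
by case/card_gt0P => c; rewrite inE => /eqP; exists c.
Qed.

Lemma sum_level1 (F : 'I_n -> R) c : z c = q -> \sum_(a | z a == q) F a = F c.
Proof.
move=> zc; apply: big_pred1 => a /=.
by apply/eqP/eqP => [za|->//]; exact: level1_unit_uniq za zc.
Qed.

End SingletonLevel.

Lemma level1_unit_in_uniq z L : z \in Om -> L \subset QU Nq ->
  {in [set a | z a \in L] &, injective z}.
Proof.
move=> zOm /subsetP LQU i j; rewrite !inE => iL _ zij.
have Nq1 : Nq (z i) = 1%N by move: (LQU _ iL); rewrite inE => /eqP.
by apply: (level1_unit_uniq zOm Nq1) => //; rewrite zij.
Qed.

Lemma card_units_in z L : z \in Om -> L \subset QU Nq ->
  #|[set a | z a \in L]| = #|L|.
Proof.
move=> zOm LQU; have /subsetP sLQU := LQU.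
have imL : z @: [set a | z a \in L] = L.
  apply/setP => l; apply/imsetP/idP => [[a]|lL]; first by rewrite inE => aL ->.
  have Nq1 : Nq l = 1%N by move: (sLQU _ lL); rewrite inE => /eqP.
  by have [c zc] := level1_unit_exists zOm Nq1; exists c => //; rewrite inE zc.
by rewrite -{2}imL card_in_imset //; exact: level1_unit_in_uniq.
Qed.

Lemma card_units_notin z L : z \in Om -> L \subset QU Nq ->
  #|[set a | z a \notin L]| = (n - #|L|)%N.
Proof.
move=> zOm LQU; have := cardsC [set a | z a \in L].
rewrite card_ord (card_units_in zOm LQU) => card_n.
rewrite -[X in (X - _)%N]card_n addKn.
by apply: eq_card => a; rewrite !inE.
Qed.

Definition agree_on L z z' :=
  [forall i, (z i \in L) || (z' i \in L) ==> (z i == z' i)].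

Lemma agree_onP L z z' :
  reflect (forall i, (z i \in L) || (z' i \in L) -> z i = z' i) (agree_on L z z').
Proof.
apply: (iffP forallP) => [eq_zz' i Li|eq_zz' i]; first exact/eqP/(implyP (eq_zz' i)).
by apply/implyP => Li; apply/eqP/eq_zz'.
Qed.

Lemma agree_on_refl L z : agree_on L z z.
Proof. by apply/agree_onP. Qed.

Lemma agree_on_sym L z z' : agree_on L z z' -> agree_on L z' z.
Proof. by move/agree_onP=> eq_zz'; apply/agree_onP=> i Li; rewrite eq_zz' // orbC. Qed.

Lemma agree_on_trans L z1 z2 z3 :
  agree_on L z1 z2 -> agree_on L z2 z3 -> agree_on L z1 z3.
Proof.
move=> /agree_onP e12 /agree_onP e23; apply/agree_onP => i /orP[Li|Li].
  by have e := e12 i; rewrite e ?Li // e23 // -e ?Li.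
by have e := e23 i; rewrite -e ?Li ?orbT // e12 // e ?Li ?orbT.
Qed.

Lemma agree_onS L L' z z' : L \subset L' -> agree_on L' z z' -> agree_on L z z'.
Proof.
move=> /subsetP sLL' /agree_onP eq_zz'; apply/agree_onP => i /orP[Li|Li]; apply: eq_zz'.
  by rewrite (sLL' _ Li).
by rewrite (sLL' _ Li) orbT.
Qed.

Definition fiber L z := [set z' in Om | agree_on L z z'].

Lemma fiberE L z z' : (z' \in fiber L z) = (z' \in Om) && agree_on L z z'.
Proof. by rewrite inE. Qed.

Lemma fiber_agree L z z' : agree_on L z z' -> fiber L z = fiber L z'.
Proof.
move=> eq_zz'; apply/setP => y; rewrite !fiberE; congr (_ && _).
apply/idP/idP; first exact: agree_on_trans (agree_on_sym eq_zz').
exact: agree_on_trans eq_zz'.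
Qed.

Lemma fiber_id L z : z \in Om -> z \in fiber L z.
Proof. by move=> zOm; rewrite fiberE zOm agree_on_refl. Qed.

Lemma card_fiber_gt0 L z : z \in Om -> (0 < #|fiber L z|)%N.
Proof. by move=> zOm; apply/card_gt0P; exists z; exact: fiber_id. Qed.

Lemma fiber_set0 z : fiber set0 z = Om.
Proof.
apply/setP => y; rewrite fiberE andb_idr // => _.
by apply/agree_onP => i; rewrite !inE.
Qed.

(* Conditional expectation of [f] given which units receive the levels in [L]. *)
Definition condE L f z := (\sum_(z' in fiber L z) f z') / #|fiber L z|%:R.

Lemma condE_agree L f z z' : agree_on L z z' -> condE L f z = condE L f z'.
Proof. by move=> eq_zz'; rewrite /condE (fiber_agree eq_zz'). Qed.

Lemma condE_set0 f z : condE set0 f z = Expect Om f.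
Proof. by rewrite /condE fiber_set0. Qed.

Lemma condE_const L f z : z \in Om ->
  {in fiber L z, forall z', f z' = f z} -> condE L f z = f z.
Proof.
move=> zOm f_const; rewrite /condE (eq_bigr _ f_const) sumr_const -[f z *+ _]mulr_natr.
by rewrite mulfK // pnatr_eq0 -lt0n card_fiber_gt0.
Qed.

Lemma sum_condE_mul L f g :
  {in Om &, forall z z', agree_on L z z' -> g z = g z'} ->
  \sum_(z in Om) condE L f z * g z = \sum_(z in Om) f z * g z.
Proof.
move=> g_agree.
have -> : \sum_(z in Om) condE L f z * g z =
    \sum_(z in Om) \sum_(z' in fiber L z) f z' * g z' / #|fiber L z'|%:R.
  apply: eq_bigr => z zOm; rewrite /condE mulrAC big_distrl /= big_distrl /=.
  apply: eq_bigr => z'; rewrite fiberE => /andP[z'Om eq_zz'].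
  by rewrite (g_agree z z') // (fiber_agree eq_zz').
rewrite (eq_bigr (fun z => \sum_(z' in Om)
    if agree_on L z z' then f z' * g z' / #|fiber L z'|%:R else 0)); last first.
  by move=> z _; rewrite -big_mkcondr; apply: eq_bigl => z'; rewrite fiberE.
rewrite exchange_big /=; apply: eq_bigr => z' z'Om; rewrite -big_mkcondr /=.
rewrite (eq_bigl (fun z => z \in fiber L z')); last first.
  by move=> z; rewrite fiberE; congr (_ && _); apply/idP/idP; exact: agree_on_sym.
rewrite sumr_const -[_ *+ _]mulr_natr divfK //.
by rewrite pnatr_eq0 -lt0n card_fiber_gt0.
Qed.

Lemma sum_sqr_condE_split L L' f m : L \subset L' ->
  \sum_(z in Om) (condE L' f z - m) ^+ 2 =
  \sum_(z in Om) (condE L' f z - condE L f z) ^+ 2 + \sum_(z in Om) (condE L f z - m) ^+ 2.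
Proof.
move=> sLL'.
have agree_L' : {in Om &, forall z z', agree_on L' z z' ->
    condE L f z - m = condE L f z' - m}.
  by move=> z z' _ _ eq_zz'; rewrite (condE_agree f (agree_onS sLL' eq_zz')).
have agree_L : {in Om &, forall z z', agree_on L z z' ->
    condE L f z - m = condE L f z' - m}.
  by move=> z z' _ _ eq_zz'; rewrite (condE_agree f eq_zz').
have orth : \sum_(z in Om) (condE L' f z - condE L f z) * (condE L f z - m) = 0.
  under eq_bigr do rewrite mulrBl.
  by rewrite sumrB (sum_condE_mul f agree_L') (sum_condE_mul f agree_L) subrr.
rewrite -big_split /=.
rewrite (eq_bigr (fun z => (condE L' f z - condE L f z) ^+ 2 + (condE L f z - m) ^+ 2
    + 2 * ((condE L' f z - condE L f z) * (condE L f z - m)))); last by move=> z _; ring.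
by rewrite big_split /= -mulr_sumr orth mulr0 addr0.
Qed.

Definition move_level z (q : 'I_Q) (a : 'I_n) : assignment :=
  [ffun i => if z i == q then z a else if i == a then q else z i].

Lemma move_levelE z q c a : z \in Om -> Nq q = 1%N -> z c = q ->
  move_level z q a = swap_units z c a.
Proof.
move=> zOm Nq1 zc; apply/ffunP => i; rewrite !ffunE.
case: (tpermP c a i) => [->|->|ic ia]; first by rewrite zc eqxx.
  by case: eqP => [/(level1_unit_uniq zOm Nq1)/(_ zc) ->|_]; rewrite ?eqxx ?zc.
case: eqP => [/(level1_unit_uniq zOm Nq1)/(_ zc)/ic//|_].
by case: eqP.
Qed.

Section Relocation.
Variables (L : {set 'I_Q}) (q : 'I_Q) (z : assignment) (c a : 'I_n).
Hypotheses (Nq1 : Nq q = 1%N) (qL : q \notin L) (zOm : z \in Om) (zc : z c = q)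
  (zaL : z a \notin L).

Lemma fiber_setU1_swap_units z' : z' \in fiber (q |: L) z ->
  swap_units z' c a \in fiber L z /\ swap_units z' c a a = q.
Proof.
rewrite !fiberE swap_units_CR ffunE tpermR => /andP[z'Om /agree_onP eq_zz'].
have z'c : z' c = q by rewrite -eq_zz' zc // !inE eqxx.
split=> //; rewrite z'Om; apply/agree_onP => i; rewrite ffunE.
case: (tpermP c a i) => [->|->|ic ia].
- rewrite zc (negPf qL) /= => z'aL; have := eq_zz' a.
  by rewrite !inE z'aL !orbT => /(_ isT) za; move: zaL; rewrite za z'aL.
- by rewrite z'c (negPf qL) (negPf zaL).
- by move=> Li; apply: eq_zz'; rewrite !inE; case/orP: Li => ->; rewrite ?orbT.
Qed.

Lemma swap_units_fiber_setU1 z' : z' \in Om ->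
  swap_units z' c a \in fiber L z -> swap_units z' c a a = q -> z' \in fiber (q |: L) z.
Proof.
move=> z'Om; rewrite fiberE ffunE tpermR => /andP[_ /agree_onP eq_zz'] z'c.
rewrite fiberE z'Om; apply/agree_onP => i.
have [->|ic] := eqVneq i c; first by rewrite zc z'c.
have z_ne : z i != q by apply: contra_neq ic => /(level1_unit_uniq zOm Nq1); apply.
have z'_ne : z' i != q by apply: contra_neq ic => /(level1_unit_uniq z'Om Nq1); apply.
rewrite !inE (negPf z_ne) (negPf z'_ne) /=.
have [ia|ia] := eqVneq i a.
  subst i; rewrite (negPf zaL) /= => z'aL; have := eq_zz' c.
  by rewrite ffunE tpermL z'aL orbT => /(_ isT); rewrite zc => qa; move: qL; rewrite qa z'aL.
by move=> Li; rewrite eq_zz' ?ffunE ?tpermD // eq_sym.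
Qed.

End Relocation.

(* Sort [y] by the unit [a] receiving [q]: for [z c = q], swapping [c] and [a] maps
   [fiber (q |: L) z] bijectively onto the [y] of [fiber L z] with [y a = q]. *)
Lemma sum_fiber_move_level L q z (h : assignment -> R) :
  q \in QU Nq -> q \notin L -> z \in Om ->
  \sum_(y in fiber L z) h y =
  \sum_(a | z a \notin L) \sum_(z' in fiber (q |: L) z) h (move_level z' q a).
Proof.
rewrite inE => /eqP Nq1 qL zOm; have [c zc] := level1_unit_exists zOm Nq1.
have -> : \sum_(y in fiber L z) h y =
    \sum_a \sum_(y in fiber L z) (if y a == q then h y else 0).
  rewrite exchange_big /=; apply: eq_bigr => y; rewrite fiberE => /andP[yOm _].
  have [cy yc] := level1_unit_exists yOm Nq1.
  by rewrite -big_mkcond (sum_level1 yOm Nq1 (fun=> h y) yc).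
rewrite (bigID (fun a => z a \notin L)) /= [X in _ + X]big1 ?addr0; last first.
  move=> a; rewrite negbK => zaL; apply: big1 => y; rewrite fiberE => /andP[_ /agree_onP eq_zy].
  by rewrite -eq_zy ?zaL //; case: eqP => // zaq; move: qL; rewrite -zaq zaL.
apply: eq_bigr => a zaL; rewrite -big_mkcondr (reindex_inj (@swap_units_inj c a)) /=.
have z'Om z' : swap_units z' c a \in fiber L z -> z' \in Om.
  by rewrite fiberE swap_units_CR => /andP[].
apply: eq_big => z'.
  apply/andP/idP => [[sF /eqP saq]|z'F].
    exact: (swap_units_fiber_setU1 Nq1 qL zOm zc zaL (z'Om z' sF) sF saq).
  by case: (fiber_setU1_swap_units qL zc zaL z'F) => sF saq; split => //; apply/eqP.
move=> /andP[sF /eqP]; rewrite ffunE tpermR => z'c.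
by rewrite (move_levelE a (z'Om z' sF) Nq1 z'c).
Qed.

Lemma agree_on_notin L z z' a : agree_on L z z' -> (z' a \notin L) = (z a \notin L).
Proof.
move/agree_onP => eq_zz'; apply/idP/idP; apply: contra => Lza.
  by rewrite -eq_zz' ?Lza.
by rewrite eq_zz' ?Lza ?orbT.
Qed.

Definition move_sqdev L q f z :=
  (n - #|L|)%:R^-1 * \sum_(a | z a \notin L) (f z - f (move_level z q a)) ^+ 2.

Section MartingaleStep.
Variables (L : {set 'I_Q}) (q : 'I_Q) (f : assignment -> R).
Hypotheses (LQU : L \subset QU Nq) (qQU : q \in QU Nq) (qL : q \notin L).

Lemma sum_units_notin z (F : 'I_n -> R) :
  \sum_(a | z a \notin L) F a = \sum_(a in [set a | z a \notin L]) F a.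
Proof. by apply: eq_bigl => a; rewrite inE. Qed.

Lemma sum_units_notin_const z (x : R) : z \in Om ->
  \sum_(a | z a \notin L) x = (n - #|L|)%:R * x.
Proof. by move=> zOm; rewrite sum_units_notin sumr_const card_units_notin // mulr_natl. Qed.

Lemma units_notin_gt0 z : z \in Om -> 0 < (n - #|L|)%:R :> R.
Proof.
move=> zOm; have [c zc] := level1_unit_exists zOm (QU_level1 qQU).
rewrite ltr0n -(card_units_notin zOm LQU); apply/card_gt0P; exists c.
by rewrite inE zc.
Qed.

Lemma card_fiber_setU1 z : z \in Om ->
  #|fiber L z|%:R = (n - #|L|)%:R * #|fiber (q |: L) z|%:R :> R.
Proof.
move=> zOm; rewrite -sumr_const (sum_fiber_move_level (fun=> 1) qQU qL zOm).
by under eq_bigr do rewrite sumr_const; rewrite sum_units_notin_const.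
Qed.

Lemma condE_setU1_sub z : z \in Om ->
  condE (q |: L) f z - condE L f z =
  (\sum_(a | z a \notin L) \sum_(z' in fiber (q |: L) z) (f z' - f (move_level z' q a)))
  / ((n - #|L|)%:R * #|fiber (q |: L) z|%:R).
Proof.
move=> zOm; have N_gt0 := units_notin_gt0 zOm.
have k_gt0 : 0 < #|fiber (q |: L) z|%:R :> R by rewrite ltr0n card_fiber_gt0.
rewrite [X in _ = X / _](eq_bigr (fun a => \sum_(z' in fiber (q |: L) z) f z'
    - \sum_(z' in fiber (q |: L) z) f (move_level z' q a))); last by move=> a _; rewrite sumrB.
rewrite {2}/condE (sum_fiber_move_level f qQU qL zOm) card_fiber_setU1 //.
rewrite sumrB sum_units_notin_const //.
by rewrite /condE; field; rewrite !gt_eqF.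
Qed.

Lemma condE_move_sqdev z : z \in Om ->
  condE (q |: L) (move_sqdev L q f) z =
  (\sum_(a | z a \notin L) \sum_(z' in fiber (q |: L) z) (f z' - f (move_level z' q a)) ^+ 2)
  / ((n - #|L|)%:R * #|fiber (q |: L) z|%:R).
Proof.
move=> zOm; have N_gt0 := units_notin_gt0 zOm.
have k_gt0 : 0 < #|fiber (q |: L) z|%:R :> R by rewrite ltr0n card_fiber_gt0.
rewrite /condE /move_sqdev -mulr_sumr exchange_big /=.
rewrite (eq_bigr (fun z' => \sum_(a | z a \notin L) (f z' - f (move_level z' q a)) ^+ 2)).
  by field; rewrite !gt_eqF.
move=> z'; rewrite fiberE => /andP[_ eq_zz']; apply: eq_bigl => a.
exact: agree_on_notin a (agree_onS (subsetUr [set q] L) eq_zz').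
Qed.

Lemma sqr_condE_setU1_sub_le z : z \in Om ->
  (condE (q |: L) f z - condE L f z) ^+ 2 <= condE (q |: L) (move_sqdev L q f) z.
Proof.
move=> zOm; have N_gt0 := units_notin_gt0 zOm.
have k_gt0 : 0 < #|fiber (q |: L) z|%:R :> R by rewrite ltr0n card_fiber_gt0.
rewrite condE_setU1_sub // condE_move_sqdev //; apply: sqr_div_le; first exact: mulr_gt0.
rewrite !sum_units_notin; apply: le_trans (sqr_sum_le _ _) _.
rewrite card_units_notin // -mulrA ler_pM2l // mulr_sumr.
by apply: ler_sum => a _; exact: sqr_sum_le.
Qed.

Lemma sum_sqr_condE_setU1_sub_le :
  \sum_(z in Om) (condE (q |: L) f z - condE L f z) ^+ 2 <=
  \sum_(z in Om) move_sqdev L q f z.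
Proof.
apply: le_trans (_ : \sum_(z in Om) condE (q |: L) (move_sqdev L q f) z * 1 <= _).
  by apply: ler_sum => z zOm; rewrite mulr1; exact: sqr_condE_setU1_sub_le.
by rewrite sum_condE_mul //; under eq_bigr do rewrite mulr1.
Qed.

End MartingaleStep.

Lemma sum_sqr_condE_seq_le f (b : R) :
  (forall L q, L \subset QU Nq -> q \in QU Nq -> q \notin L ->
     \sum_(z in Om) move_sqdev L q f z <= b) ->
  forall s : seq 'I_Q, uniq s -> {subset s <= QU Nq} ->
  \sum_(z in Om) (condE [set x in s] f z - Expect Om f) ^+ 2 <= (size s)%:R * b.
Proof.
move=> move_le; elim/last_ind => [_ _|s q IHs].
  rewrite mul0r big1 // => z _.
  by rewrite (_ : [set x in [::]] = set0) ?condE_set0 ?subrr ?expr0n //; apply/setP => x; rewrite !inE.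
rewrite rcons_uniq => /andP[qs uniq_s] sQU.
have sQU' : {subset s <= QU Nq} by move=> x xs; apply: sQU; rewrite mem_rcons inE xs orbT.
have qQU : q \in QU Nq by apply: sQU; rewrite mem_rcons inE eqxx.
have LQU : [set x in s] \subset QU Nq by apply/subsetP => x; rewrite inE; exact: sQU'.
have qL : q \notin [set x in s] by rewrite inE.
have -> : [set x in rcons s q] = q |: [set x in s].
  by apply/setP => x; rewrite !inE mem_rcons inE.
rewrite (sum_sqr_condE_split _ _ (subsetUr _ _)) size_rcons -[(size s).+1]addn1 natrD mulrDl mul1r addrC.
apply: lerD; first exact: IHs.
exact: le_trans (sum_sqr_condE_setU1_sub_le f LQU qQU qL) (move_le _ _ LQU qQU qL).
Qed.


Lemma sum_sqr_dev_le f (b : R) :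
  {in Om &, forall z z', agree_on (QU Nq) z z' -> f z = f z'} ->
  (forall L q, L \subset QU Nq -> q \in QU Nq -> q \notin L ->
     \sum_(z in Om) move_sqdev L q f z <= b) ->
  \sum_(z in Om) (f z - Expect Om f) ^+ 2 <= #|QU Nq|%:R * b.
Proof.
move=> f_agree move_le.
have enumQU : {subset enum (QU Nq) <= QU Nq} by move=> x; rewrite mem_enum.
have := sum_sqr_condE_seq_le move_le (enum_uniq (QU Nq)) enumQU.
rewrite -cardE (_ : [set x in enum (QU Nq)] = QU Nq); last first.
  by apply/setP => x; rewrite inE mem_enum.
apply: le_trans; apply: ler_sum => z zOm; rewrite condE_const // => z'.
by rewrite fiberE => /andP[z'Om eq_zz']; rewrite (f_agree z z').
Qed.

Lemma sum_CR_unit_level_swap (i j : 'I_n) (r : 'I_Q) :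
  \sum_(z in Om) (z i == r)%:R = \sum_(z in Om) (z j == r)%:R :> R.
Proof.
rewrite (reindex_inj (@swap_units_inj i j)) /=.
by apply: eq_big => z; rewrite ?swap_units_CR // ffunE tpermL.
Qed.

Lemma natr_mul_sum_CR_unit_level (i : 'I_n) (r : 'I_Q) :
  n%:R * \sum_(z in Om) (z i == r)%:R = (Nq r * #|Om|)%:R :> R.
Proof.
transitivity (\sum_j \sum_(z in Om) (z j == r)%:R : R).
  by rewrite -(eq_bigr _ (fun j _ => sum_CR_unit_level_swap i j r)) sumr_const card_ord mulr_natl.
rewrite exchange_big /= natrM mulrC mulr_natl -sumr_const; apply: eq_bigr => z zOm.
move: zOm; rewrite mem_CR => /forallP /(_ r) /eqP <-.
rewrite -sum1_card natr_sum [RHS]big_mkcond; apply: eq_bigr => j _.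
by rewrite inE; case: eqP.
Qed.

Lemma sum_CR_level (r : 'I_Q) (h : 'I_n -> R) :
  n%:R * \sum_(z in Om) \sum_(i | z i == r) h i = (Nq r * #|Om|)%:R * \sum_i h i.
Proof.
have -> : \sum_(z in Om) \sum_(i | z i == r) h i = \sum_i h i * \sum_(z in Om) (z i == r)%:R.
  under eq_bigr do rewrite big_mkcond; rewrite exchange_big /=.
  apply: eq_bigr => i _; rewrite mulr_sumr; apply: eq_bigr => z _.
  by case: eqP; rewrite ?mulr1 ?mulr0.
rewrite !mulr_sumr; apply: eq_bigr => i _.
by rewrite mulrCA natr_mul_sum_CR_unit_level mulrC.
Qed.

Lemma sum_CR_level1 (r : 'I_Q) (h : 'I_n -> R) : Nq r = 1%N ->
  n%:R * \sum_(z in Om) \sum_(i | z i == r) h i = #|Om|%:R * \sum_i h i.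
Proof. by move=> Nq1; rewrite sum_CR_level Nq1 mul1n. Qed.

Lemma sum_units_in z L (h : 'I_Q -> 'I_n -> R) :
  \sum_(a | z a \in L) h (z a) a = \sum_(l in L) \sum_(a | z a == l) h l a.
Proof.
rewrite (partition_big z (mem L)) //=; apply: eq_bigr => l Ll; apply: eq_big => a.
  by case: (eqVneq (z a) l) => [->|]; rewrite ?Ll ?andbF ?andbT.
by case/andP => _ /eqP ->.
Qed.

Lemma sum_CR_units_notin L (h : 'I_n -> R) : L \subset QU Nq ->
  n%:R * \sum_(z in Om) \sum_(a | z a \notin L) h a
  = #|Om|%:R * (n%:R - #|L|%:R) * \sum_i h i.
Proof.
move=> /subsetP LQU.
have split_in z : \sum_(a | z a \notin L) h a = \sum_i h i - \sum_(a | z a \in L) h a.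
  by rewrite [\sum_i h i](bigID (fun a => z a \in L)) /= addrC addrK.
under eq_bigr do rewrite split_in (sum_units_in _ _ (fun=> h)).
rewrite sumrB [X in _ * (_ - X)]exchange_big /= mulrBr [X in _ - X]mulr_sumr.
rewrite [X in _ - X](eq_bigr (fun l => #|Om|%:R * \sum_i h i)); last first.
  by move=> l Ll; rewrite sum_CR_level1 //; exact: QU_level1 (LQU _ Ll).
rewrite !sumr_const -[_ *+ #|Om|]mulr_natl -[_ *+ #|L|]mulr_natl; ring.
Qed.

End CompleteRandomization.

Section GroupMean.
Variables (T : realFieldType) (I : finType).
Implicit Types (B : {set I}) (u v : I -> T).

Definition gmean B v := #|B|%:R^-1 * \sum_(t in B) v t.

Lemma ler_gmean B u v : (forall t, t \in B -> u t <= v t) -> gmean B u <= gmean B v.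
Proof. by move=> le_uv; rewrite ler_wpM2l ?invr_ge0 ?ler0n //; exact: ler_sum. Qed.

Lemma gmean_ge0 B v : (forall t, t \in B -> 0 <= v t) -> 0 <= gmean B v.
Proof. by move=> v_ge0; rewrite mulr_ge0 ?invr_ge0 ?ler0n // sumr_ge0. Qed.

Lemma gmeanD B u v : gmean B (fun t => u t + v t) = gmean B u + gmean B v.
Proof. by rewrite /gmean big_split mulrDr. Qed.

Lemma gmeanB B u v : gmean B (fun t => u t - v t) = gmean B u - gmean B v.
Proof. by rewrite /gmean sumrB mulrBr. Qed.

Lemma gmeanZ B c v : gmean B (fun t => c * v t) = c * gmean B v.
Proof. by rewrite /gmean -mulr_sumr mulrCA. Qed.

Lemma gmean_const B c : (0 < #|B|)%N -> gmean B (fun=> c) = c.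
Proof.
by move=> B_gt0; rewrite /gmean sumr_const -[c *+ _]mulr_natl mulKf // pnatr_eq0 -lt0n.
Qed.

Lemma gmean_lin B a b c u v : (0 < #|B|)%N ->
  gmean B (fun t => a * u t + b * v t + c) = a * gmean B u + b * gmean B v + c.
Proof. by move=> B_gt0; rewrite !gmeanD !gmeanZ gmean_const. Qed.

Lemma gmean_sum (J : finType) (A : {pred J}) B (F : J -> I -> T) :
  \sum_(j in A) gmean B (F j) = gmean B (fun t => \sum_(j in A) F j t).
Proof. by rewrite /gmean -mulr_sumr exchange_big. Qed.

Lemma sqr_gmean_le B v : (0 < #|B|)%N -> gmean B v ^+ 2 <= gmean B (fun t => v t ^+ 2).
Proof.
move=> B_gt0; have k_gt0 : 0 < #|B|%:R :> T by rewrite ltr0n.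
rewrite /gmean exprMn expr2 -mulrA ler_pM2l ?invr_gt0 //.
have kV_ge0 : 0 <= #|B|%:R^-1 :> T by rewrite invr_ge0 ltW.
apply: le_trans (ler_wpM2l kV_ge0 (sqr_sum_le B v)) _.
by rewrite mulKf ?gt_eqF.
Qed.

(* Weighted sums of squared deviations from the group mean change by a sum of first
   order terms: this is [a^2 - b^2 = (a - b)(a + b)] together with the fact that
   deviations from [gmean B] sum to zero over [B]. *)
Lemma sum_wsqr_dev_sub B (w y y' : I -> T) : (0 < #|B|)%N ->
  let e t := w t * ((y t - gmean B y) + (y' t - gmean B y')) in
  \sum_(r in B) w r * ((y' r - gmean B y') ^+ 2 - (y r - gmean B y) ^+ 2) =
  \sum_(r in B) (y' r - y r) * (e r - gmean B e).
Proof.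
move=> B_gt0 e.
rewrite (eq_bigr (fun r => (y' r - y r) * e r - e r * (gmean B y' - gmean B y))); last first.
  by move=> r _; rewrite /e; ring.
rewrite [RHS](eq_bigr (fun r => (y' r - y r) * e r - (y' r - y r) * gmean B e)); last first.
  by move=> r _; rewrite mulrBr.
rewrite !sumrB; congr (_ - _); rewrite -!mulr_suml /gmean sumrB; ring.
Qed.

End GroupMean.

Lemma quartic_poly_le (T : realFieldType) (u u' g g' z : T) :
  0 <= u -> 0 <= u' -> 0 <= g -> 0 <= g' -> 0 <= z ->
  (2 * u + 2 * u') * (4 * (3 * u + 3 * u' + 9 * g + 9 * g' + 12 * z)) <=
  120 * (u ^+ 2 + g ^+ 2 + z * u + u' ^+ 2 + g' ^+ 2 + z * u').
Proof.
move=> u_ge0 u'_ge0 g_ge0 g'_ge0 z_ge0.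
have := sqr_ge0 (u - u'); have := sqr_ge0 (u + u' - g - g'); have := sqr_ge0 (g - g').
nra.
Qed.

Section DeviationBounds.
Variables (T : realFieldType) (I : finType) (B : {set I}) (w d : I -> T) (wbar zeta : T).
Hypotheses (B_gt0 : (0 < #|B|)%N) (w_le : forall t, t \in B -> `|w t| <= wbar)
  (d_le : forall t, t \in B -> `|d t| <= zeta).

Lemma sqr_wdev_gmean_le (e : I -> T) s : s \in B ->
  (w s * e s - gmean B (fun t => w t * e t)) ^+ 2 <=
  2 * wbar ^+ 2 * (e s ^+ 2 + gmean B (fun t => e t ^+ 2)).
Proof.
move=> sB; have w2_le t : t \in B -> w t ^+ 2 <= wbar ^+ 2.
  by move=> tB; exact/sqr_le_of_norm_le/w_le.
have le_s : (w s * e s) ^+ 2 <= wbar ^+ 2 * e s ^+ 2.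
  by rewrite exprMn ler_wpM2r ?sqr_ge0 ?w2_le.
have le_mean : gmean B (fun t => w t * e t) ^+ 2 <= wbar ^+ 2 * gmean B (fun t => e t ^+ 2).
  apply: le_trans (sqr_gmean_le _ B_gt0) _; rewrite -gmeanZ; apply: ler_gmean => t tB.
  by rewrite exprMn ler_wpM2r ?sqr_ge0 ?w2_le.
have := sqr_ge0 (w s * e s + gmean B (fun t => w t * e t)); lra.
Qed.

Lemma sqr_dev_shift_le (x : I -> T) t : t \in B ->
  (x t - gmean B x + d t) ^+ 2 <=
  3 * x t ^+ 2 + 3 * gmean B (fun t => x t ^+ 2) + 3 * zeta ^+ 2.
Proof.
move=> tB; have := sqr_gmean_le x B_gt0; have := sqr_le_of_norm_le (d_le tB).
have := sqr_ge0 (x t + gmean B x); have := sqr_ge0 (x t - d t).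
have := sqr_ge0 (gmean B x + d t); lra.
Qed.

Definition pair_dev (x x' : I -> T) t := (x t - gmean B x + d t) + (x' t - gmean B x' + d t).

Lemma sqr_pair_dev_le (x x' : I -> T) t : t \in B -> pair_dev x x' t ^+ 2 <=
  6 * x t ^+ 2 + 6 * x' t ^+ 2 + (6 * gmean B (fun t => x t ^+ 2)
  + 6 * gmean B (fun t => x' t ^+ 2) + 12 * zeta ^+ 2).
Proof.
move=> tB; have := sqr_dev_shift_le x tB; have := sqr_dev_shift_le x' tB.
by have := sqr_ge0 ((x t - gmean B x + d t) - (x' t - gmean B x' + d t)); rewrite /pair_dev; lra.
Qed.

Lemma sqr_wpair_dev_le (x x' : I -> T) s : s \in B ->
  (w s * pair_dev x x' s - gmean B (fun t => w t * pair_dev x x' t)) ^+ 2 <=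
  4 * wbar ^+ 2 * (3 * x s ^+ 2 + 3 * x' s ^+ 2 + 9 * gmean B (fun t => x t ^+ 2)
    + 9 * gmean B (fun t => x' t ^+ 2) + 12 * zeta ^+ 2).
Proof.
move=> sB; set g := gmean B (fun t => x t ^+ 2); set g' := gmean B (fun t => x' t ^+ 2).
have mean_le : gmean B (fun t => pair_dev x x' t ^+ 2) <= 12 * g + 12 * g' + 12 * zeta ^+ 2.
  apply: le_trans (ler_gmean (fun t tB => sqr_pair_dev_le x x' tB)) _.
  by rewrite gmean_lin // -/g -/g'; lra.
have sum_le : pair_dev x x' s ^+ 2 + gmean B (fun t => pair_dev x x' t ^+ 2) <=
    2 * (3 * x s ^+ 2 + 3 * x' s ^+ 2 + 9 * g + 9 * g' + 12 * zeta ^+ 2).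
  by have := sqr_pair_dev_le x x' sB; rewrite -/g -/g'; lra.
apply: le_trans (sqr_wdev_gmean_le _ sB) _.
by have := ler_wpM2l (sqr_ge0 wbar) sum_le; lra.
Qed.

(* The bound on one summand of the first order expansion [sum_wsqr_dev_sub], for outcome
   vectors centred as [x + Ybar] and [x' + Ybar] with [d] the deviation of [Ybar] from its
   group mean. *)
Lemma sqr_wsqr_dev_term_le (x x' e : I -> T) s : s \in B ->
  (forall t, t \in B -> e t = w t * pair_dev x x' t) ->
  ((x' s - x s) * (e s - gmean B e)) ^+ 2 <=
  120 * wbar ^+ 2 * (x s ^+ 4 + gmean B (fun t => x t ^+ 4) + zeta ^+ 2 * x s ^+ 2
    + x' s ^+ 4 + gmean B (fun t => x' t ^+ 4) + zeta ^+ 2 * x' s ^+ 2).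
Proof.
move=> sB eE; have -> : gmean B e = gmean B (fun t => w t * pair_dev x x' t).
  by rewrite /gmean; congr (_ * _); apply: eq_bigr => t tB; rewrite eE.
rewrite eE //; have psi_le := sqr_wpair_dev_le x x' sB.
set u := x s ^+ 2 in psi_le *; set u' := x' s ^+ 2 in psi_le *.
set g := gmean B (fun t => x t ^+ 2) in psi_le *.
set g' := gmean B (fun t => x' t ^+ 2) in psi_le *.
have diff_le : (x' s - x s) ^+ 2 <= 2 * u + 2 * u'.
  by rewrite /u /u'; have := sqr_ge0 (x' s + x s); lra.
have g_ge0 : 0 <= g by apply: gmean_ge0 => t _; exact: sqr_ge0.
have g'_ge0 : 0 <= g' by apply: gmean_ge0 => t _; exact: sqr_ge0.
have g2_le : g ^+ 2 <= gmean B (fun t => x t ^+ 4).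
  by apply: le_trans (sqr_gmean_le _ B_gt0) _; apply: ler_gmean => t _; rewrite -exprM.
have g'2_le : g' ^+ 2 <= gmean B (fun t => x' t ^+ 4).
  by apply: le_trans (sqr_gmean_le _ B_gt0) _; apply: ler_gmean => t _; rewrite -exprM.
have -> : x s ^+ 4 = u ^+ 2 by rewrite /u -exprM.
have -> : x' s ^+ 4 = u' ^+ 2 by rewrite /u' -exprM.
rewrite exprMn; apply: le_trans (ler_pM (sqr_ge0 _) (sqr_ge0 _) diff_le psi_le) _.
have w2_ge0 := sqr_ge0 wbar.
have := ler_wpM2l w2_ge0 (quartic_poly_le (sqr_ge0 (x s)) (sqr_ge0 (x' s)) g_ge0 g'_ge0
  (sqr_ge0 zeta)).
have := ler_wpM2l w2_ge0 g2_le; have := ler_wpM2l w2_ge0 g'2_le.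
by rewrite -/u -/u'; lra.
Qed.

End DeviationBounds.

Section VhatVariance.
Variables (n Q : nat) (Nq : 'I_Q -> nat) (Y : 'I_n -> 'I_Q -> R)
  (P : {set {set 'I_Q}}) (w : 'I_Q -> R) (wbar Delta zeta : R).
Hypotheses (P_part : partition P (QU Nq)) (P_card : forall B, B \in P -> (2 <= #|B|)%N)
  (cond3 : forall q, n%:R^-1 * \sum_(i < n) (Y i q - Ybar Y q) ^+ 4 <= Delta ^+ 4)
  (cond6 : forall B, B \in P -> forall q, q \in B -> `|Ybar Y q - Ybar_grp Y B| <= zeta)
  (w_le : forall q, q \in QU Nq -> `|w q| <= wbar).

Local Notation QU := (QU Nq).
Local Notation Om := (@CR_support n Q Nq).
Implicit Types (y : 'I_Q -> R) (z : assignment n Q) (L : {set 'I_Q}).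

Definition group_of r := pblock P r.

Lemma P_trivI : trivIset P.
Proof. by case/and3P: P_part. Qed.

Lemma P_cover : cover P = QU.
Proof. by case/and3P: P_part => /eqP. Qed.

Lemma group_of_mem r : r \in QU -> group_of r \in P.
Proof. by move=> rQU; apply: pblock_mem; rewrite P_cover. Qed.

Lemma mem_group_of r : r \in QU -> r \in group_of r.
Proof. by move=> rQU; rewrite /group_of mem_pblock P_cover. Qed.

Lemma group_of_sub r : r \in QU -> {subset group_of r <= QU}.
Proof.
move=> rQU t tr; rewrite -P_cover; apply/bigcupP.
by exists (group_of r) => //; exact: group_of_mem.
Qed.

Lemma group_of_eq r t : r \in QU -> t \in group_of r -> group_of t = group_of r.
Proof. by move=> rQU tr; apply: same_pblock => //; exact: P_trivI. Qed.

Lemma card_group_of_gt0 r : r \in QU -> (0 < #|group_of r|)%N.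
Proof. by move=> rQU; apply: leq_trans (P_card (group_of_mem rQU)). Qed.

Lemma sum_QU_groups (F : 'I_Q -> R) :
  \sum_(r in QU) F r = \sum_(B in P) \sum_(r in B) F r.
Proof. by rewrite -P_cover (big_trivIset _ P_trivI). Qed.

Lemma group_ofE B r : B \in P -> r \in B -> group_of r = B.
Proof. exact: def_pblock P_trivI. Qed.

Definition vhat_of y := \sum_(r in QU) w r * (y r - gmean (group_of r) y) ^+ 2.

Lemma vhatE z : vhat P w Y z = vhat_of (Yobs Y z).
Proof.
rewrite /vhat /vhat_of sum_QU_groups; apply: eq_bigr => B BP; apply: eq_bigr => r rB.
by rewrite (group_ofE BP rB).
Qed.

Definition wdev y y' t :=
  w t * ((y t - gmean (group_of t) y) + (y' t - gmean (group_of t) y')).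

Definition vhat_coef y y' r := wdev y y' r - gmean (group_of r) (wdev y y').

Lemma vhat_of_sub y y' :
  vhat_of y' - vhat_of y = \sum_(r in QU) (y' r - y r) * vhat_coef y y' r.
Proof.
rewrite /vhat_of -sumrB; under eq_bigr do rewrite -mulrBr.
rewrite !sum_QU_groups; apply: eq_bigr => B BP.
have B_gt0 : (0 < #|B|)%N by apply: leq_trans (P_card BP).
have grpB r : r \in B -> group_of r = B by exact: group_ofE.
rewrite (eq_bigr (fun r => w r * ((y' r - gmean B y') ^+ 2 - (y r - gmean B y) ^+ 2)));
  last by move=> r rB; rewrite grpB.
rewrite sum_wsqr_dev_sub //; apply: eq_bigr => r rB.
rewrite /vhat_coef /wdev grpB //; congr (_ * (_ - _)).
by rewrite /gmean; congr (_ * _); apply: eq_bigr => t tB; rewrite grpB.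
Qed.

Definition dev_moment y s := (y s - Ybar Y s) ^+ 4
  + gmean (group_of s) (fun t => (y t - Ybar Y t) ^+ 4) + zeta ^+ 2 * (y s - Ybar Y s) ^+ 2.

Lemma sqr_vhat_term_le y y' s : s \in QU ->
  ((y' s - y s) * vhat_coef y y' s) ^+ 2 <=
  120 * wbar ^+ 2 * (dev_moment y s + dev_moment y' s).
Proof.
move=> sQU; rewrite /vhat_coef /dev_moment; set B := group_of s.
pose d t := Ybar Y t - gmean B (Ybar Y).
have grpB t : t \in B -> group_of t = B by exact: group_of_eq.
have d_le t : t \in B -> `|d t| <= zeta by move=> tB; exact: cond6 (group_of_mem sQU) _ tB.
have wB_le t : t \in B -> `|w t| <= wbar by move=> tB; exact/w_le/(group_of_sub sQU).
have dev_shift y1 t : y1 t - gmean B y1 =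
    (y1 t - Ybar Y t) - gmean B (fun t => y1 t - Ybar Y t) + d t.
  by rewrite gmeanB /d; ring.
have wdevE t : t \in B -> wdev y y' t =
    w t * pair_dev B d (fun t => y t - Ybar Y t) (fun t => y' t - Ybar Y t) t.
  by move=> tB; rewrite /wdev /pair_dev grpB // -!dev_shift.
have := sqr_wsqr_dev_term_le (card_group_of_gt0 sQU) wB_le d_le (mem_group_of sQU) wdevE.
rewrite (_ : y' s - y s = (y' s - Ybar Y s) - (y s - Ybar Y s)); last by ring.
by move/le_trans; apply; rewrite !addrA.
Qed.

Lemma Yobs_level1 z t c : z \in Om -> Nq t = 1%N -> z c = t -> Yobs Y z t = Y c t.
Proof. by move=> zOm Nq1 zc; rewrite /Yobs (sum_level1 zOm Nq1 (fun i => Y i t) zc). Qed.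

Lemma Yobs_swap_units z c a t ct : z \in Om -> Nq t = 1%N -> z ct = t ->
  Yobs Y (swap_units z c a) t = Y (tperm c a ct) t.
Proof.
move=> zOm Nq1 zct; apply: Yobs_level1 => //; first by rewrite swap_units_CR.
by rewrite ffunE tpermK.
Qed.

(* Swapping the units [c] (which carries [q]) and [a] changes the observed outcomes of at
   most the two levels [q] and [z a]. *)
Lemma sqr_vhat_swap_le z q c a : z \in Om -> q \in QU -> z c = q ->
  (vhat P w Y z - vhat P w Y (swap_units z c a)) ^+ 2 <=
  240 * wbar ^+ 2 * (dev_moment (Yobs Y z) q + dev_moment (Yobs Y (swap_units z c a)) q
    + (if z a \in QU then dev_moment (Yobs Y z) (z a)
         + dev_moment (Yobs Y (swap_units z c a)) (z a) else 0)).
Proof.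
move=> zOm qQU zc; set y := Yobs Y z; set y' := Yobs Y (swap_units z c a); rewrite !vhatE -/y -/y' -sqrrN opprB vhat_of_sub.
have supp r : r \in QU -> r != q -> r != z a -> (y' r - y r) * vhat_coef y y' r = 0.
  move=> rQU rq ra; have Nq1 := QU_level1 rQU; have [cr zcr] := level1_unit_exists zOm Nq1.
  rewrite /y /y' (Yobs_swap_units c a zOm Nq1 zcr) (Yobs_level1 zOm Nq1 zcr).
  rewrite tpermD ?subrr ?mul0r //.
    by apply: contraNneq rq => ccr; rewrite -zcr -ccr zc.
  by apply: contraNneq ra => acr; rewrite -zcr -acr.
apply: le_trans (sqr_sum_supp2_le qQU supp) _.
have := sqr_vhat_term_le y y' qQU; case: ifP => // zaQU; last by lra.
by have := sqr_vhat_term_le y y' zaQU; lra.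
Qed.

Definition unit_moment s i := (Y i s - Ybar Y s) ^+ 4
  + gmean (group_of s) (fun t => (Y i t - Ybar Y t) ^+ 4) + zeta ^+ 2 * (Y i s - Ybar Y s) ^+ 2.

Lemma dev_moment_swap_units_le z c a s : z \in Om -> s \in QU ->
  dev_moment (Yobs Y (swap_units z c a)) s <=
  dev_moment (Yobs Y z) s + unit_moment s a + unit_moment s c.
Proof.
move=> zOm sQU.
have pow_le t k : t \in QU -> ~~ odd k ->
    (Yobs Y (swap_units z c a) t - Ybar Y t) ^+ k <=
    (Yobs Y z t - Ybar Y t) ^+ k + (Y a t - Ybar Y t) ^+ k + (Y c t - Ybar Y t) ^+ k.
  move=> tQU k_even; have Nq1 := QU_level1 tQU; have [ct zct] := level1_unit_exists zOm Nq1.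
  rewrite (Yobs_swap_units c a zOm Nq1 zct) (Yobs_level1 zOm Nq1 zct).
  have ge0 i := exprn_even_ge0 (Y i t - Ybar Y t) k_even.
  by have := ge0 ct; have := ge0 a; have := ge0 c; case: (tpermP c a ct) => [->|->|_ _]; lra.
have mean_le : gmean (group_of s) (fun t => (Yobs Y (swap_units z c a) t - Ybar Y t) ^+ 4) <=
    gmean (group_of s) (fun t => (Yobs Y z t - Ybar Y t) ^+ 4)
    + gmean (group_of s) (fun t => (Y a t - Ybar Y t) ^+ 4)
    + gmean (group_of s) (fun t => (Y c t - Ybar Y t) ^+ 4).
  by rewrite -!gmeanD; apply: ler_gmean => t ts; apply: pow_le => //; exact: group_of_sub ts.
have := ler_wpM2l (sqr_ge0 zeta) (pow_le s 2%N sQU isT).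
by have := pow_le s 4%N sQU isT; rewrite /dev_moment /unit_moment; lra.
Qed.

Lemma sum_dev4_le t : \sum_i (Y i t - Ybar Y t) ^+ 4 <= n%:R * Delta ^+ 4.
Proof.
have [n0|n_gt0] := posnP n.
  rewrite big1; last by move=> i _; have := ltn_ord i; rewrite {2}n0.
  by rewrite mulr_ge0 ?ler0n ?exprn_even_ge0.
have n_gt0' : 0 < n%:R :> R by rewrite ltr0n.
by rewrite -ler_pdivrMl // mulrC.
Qed.

Lemma sum_dev2_le t : \sum_i (Y i t - Ybar Y t) ^+ 2 <= n%:R * Delta ^+ 2.
Proof.
have cs := sqr_sum_le 'I_n (fun i => (Y i t - Ybar Y t) ^+ 2).
rewrite card_ord [X in _ <= _ * X](eq_bigr (fun i => (Y i t - Ybar Y t) ^+ 4)) in cs; last first.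
  by move=> i _; rewrite -exprM.
have n4_le := ler_wpM2l (ler0n R n) (sum_dev4_le t).
have S_ge0 : 0 <= \sum_i (Y i t - Ybar Y t) ^+ 2 by apply: sumr_ge0 => i _; exact: sqr_ge0.
have R_ge0 : 0 <= n%:R * Delta ^+ 2 by rewrite mulr_ge0 ?ler0n ?sqr_ge0.
rewrite -ler_sqr ?nnegrE //.
apply: le_trans cs (le_trans n4_le _).
by rewrite exprMn -exprM mulrA -expr2.
Qed.

Definition moment_bound := 2 * Delta ^+ 4 + zeta ^+ 2 * Delta ^+ 2.

Lemma moment_bound_ge0 : 0 <= moment_bound.
Proof.
have D4_ge0 : 0 <= Delta ^+ 4 by exact: exprn_even_ge0.
by have := mulr_ge0 (sqr_ge0 zeta) (sqr_ge0 Delta); rewrite /moment_bound; lra.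
Qed.

Lemma sum_unit_moment_le r : r \in QU -> \sum_i unit_moment r i <= n%:R * moment_bound.
Proof.
move=> rQU; rewrite /unit_moment !big_split /= gmean_sum -mulr_sumr.
have mean_le : gmean (group_of r) (fun t => \sum_i (Y i t - Ybar Y t) ^+ 4)
    <= n%:R * Delta ^+ 4.
  rewrite -[n%:R * _](gmean_const _ (card_group_of_gt0 rQU)); apply: ler_gmean => t _.
  exact: sum_dev4_le.
have := ler_wpM2l (sqr_ge0 zeta) (sum_dev2_le r).
by have := sum_dev4_le r; rewrite /moment_bound; lra.
Qed.

Lemma dev_pow_level1 z t k : z \in Om -> t \in QU ->
  (Yobs Y z t - Ybar Y t) ^+ k = \sum_(i | z i == t) (Y i t - Ybar Y t) ^+ k.
Proof.
move=> zOm tQU; have Nq1 := QU_level1 tQU; have [c zc] := level1_unit_exists zOm Nq1.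
by rewrite (Yobs_level1 zOm Nq1 zc) (sum_level1 zOm Nq1 (fun i => (Y i t - Ybar Y t) ^+ k) zc).
Qed.

Lemma sum_CR_dev_moment r : r \in QU ->
  n%:R * \sum_(z in Om) dev_moment (Yobs Y z) r = #|Om|%:R * \sum_i unit_moment r i.
Proof.
move=> rQU; have grp_QU := group_of_sub rQU.
have -> : \sum_(z in Om) dev_moment (Yobs Y z) r = \sum_(z in Om)
    (\sum_(i | z i == r) (Y i r - Ybar Y r) ^+ 4
     + gmean (group_of r) (fun t => \sum_(i | z i == t) (Y i t - Ybar Y t) ^+ 4)
     + zeta ^+ 2 * \sum_(i | z i == r) (Y i r - Ybar Y r) ^+ 2).
  apply: eq_bigr => z zOm; rewrite /dev_moment !dev_pow_level1 //; congr (_ + _ + _).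
  by rewrite /gmean; congr (_ * _); apply: eq_bigr => t tr; rewrite dev_pow_level1 ?grp_QU.
rewrite /unit_moment !big_split /= !gmean_sum -!mulr_sumr !mulrDr.
have Nq1 := QU_level1 rQU; congr (_ + _ + _); first exact: sum_CR_level1.
  rewrite -!gmeanZ /gmean; congr (_ * _); apply: eq_bigr => t tr.
  exact/sum_CR_level1/QU_level1/grp_QU.
by rewrite mulrCA [RHS]mulrCA sum_CR_level1.
Qed.

Lemma sum_CR_le_avg r (F : assignment n Q -> R) (S b : R) : r \in QU ->
  n%:R * \sum_(z in Om) F z = #|Om|%:R * S -> S <= n%:R * b ->
  \sum_(z in Om) F z <= #|Om|%:R * b.
Proof.
move=> rQU sumF S_le; have [Om0|[z0 z0Om]] := set_0Vmem Om.
  by rewrite Om0 big_set0 cards0 mul0r.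
have [c _] := level1_unit_exists z0Om (QU_level1 rQU).
have n_gt0 : 0 < n%:R :> R by rewrite ltr0n (leq_ltn_trans (leq0n c)).
rewrite -(ler_pM2l n_gt0) sumF mulrCA ler_wpM2l //.
Qed.


Lemma sum_CR_dev_moment_le r : r \in QU ->
  \sum_(z in Om) dev_moment (Yobs Y z) r <= #|Om|%:R * moment_bound.
Proof. by move=> rQU; exact: sum_CR_le_avg rQU (sum_CR_dev_moment rQU) (sum_unit_moment_le rQU). Qed.

Lemma sum_CR_unit_moment_level_le q r : q \in QU -> r \in QU ->
  \sum_(z in Om) \sum_(i | z i == q) unit_moment r i <= #|Om|%:R * moment_bound.
Proof.
move=> qQU rQU.
exact: sum_CR_le_avg qQU (sum_CR_level1 (unit_moment r) (QU_level1 qQU)) (sum_unit_moment_le rQU).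
Qed.

Lemma sum_CR_unit_moment_notin_le L q : L \subset QU -> q \in QU ->
  \sum_(z in Om) \sum_(a | z a \notin L) unit_moment q a
  <= (n - #|L|)%:R * (#|Om|%:R * moment_bound).
Proof.
move=> LQU qQU; have [Om0|[z0 z0Om]] := set_0Vmem Om.
  by rewrite Om0 big_set0 cards0 mul0r mulr0.
have L_le_n : (#|L| <= n)%N.
  by rewrite -(card_units_in z0Om LQU); apply: leq_trans (max_card _) _; rewrite card_ord.
rewrite mulrCA; apply: (sum_CR_le_avg qQU); first by rewrite sum_CR_units_notin // -mulrA.
rewrite natrB // mulrCA ler_wpM2l ?subr_ge0 ?ler_nat //.
exact: sum_unit_moment_le qQU.
Qed.


Definition move_bound q z a :=
  2 * dev_moment (Yobs Y z) q + unit_moment q a + \sum_(i | z i == q) unit_moment q i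
  + (if z a \in QU then 2 * dev_moment (Yobs Y z) (z a) + unit_moment (z a) a
       + \sum_(i | z i == q) unit_moment (z a) i else 0).

Lemma sqr_vhat_move_le z q a : z \in Om -> q \in QU ->
  (vhat P w Y z - vhat P w Y (move_level z q a)) ^+ 2 <= 240 * wbar ^+ 2 * move_bound q z a.
Proof.
move=> zOm qQU; have Nq1 := QU_level1 qQU; have [c zc] := level1_unit_exists zOm Nq1.
rewrite (move_levelE a zOm Nq1 zc); apply: le_trans (sqr_vhat_swap_le a zOm qQU zc) _.
apply: ler_wpM2l; first by rewrite mulr_ge0 ?sqr_ge0.
rewrite /move_bound !(sum_level1 zOm Nq1 (unit_moment _) zc).
have := dev_moment_swap_units_le c a zOm qQU.
case: ifP => zaQU; last by lra.
by have := dev_moment_swap_units_le c a zOm zaQU; lra.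
Qed.

Lemma sum_move_bound L q z : q \in QU -> q \notin L -> z \in Om -> L \subset QU ->
  \sum_(a | z a \notin L) move_bound q z a =
  (n - #|L|)%:R * (2 * dev_moment (Yobs Y z) q + \sum_(i | z i == q) unit_moment q i)
  + \sum_(a | z a \notin L) unit_moment q a
  + \sum_(r in QU :\: L) (2 * dev_moment (Yobs Y z) r + \sum_(a | z a == r) unit_moment r a
      + \sum_(i | z i == q) unit_moment r i).
Proof.
move=> qQU qL zOm LQU.
pose G r a := 2 * dev_moment (Yobs Y z) r + unit_moment r a
  + \sum_(i | z i == q) unit_moment r i.
rewrite (eq_bigr (fun a => (2 * dev_moment (Yobs Y z) q + \sum_(i | z i == q) unit_moment q i)
    + unit_moment q a + (if z a \in QU then G (z a) a else 0))); last first.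
  by move=> a _; rewrite /move_bound /G; ring.
rewrite big_split /= big_split /= (sum_units_notin_const LQU _ zOm); congr (_ + _).
rewrite -big_mkcondr (eq_bigl (fun a => z a \in QU :\: L)); last first.
  by move=> a; rewrite !inE andbC.
rewrite (sum_units_in z (QU :\: L) G); apply: eq_bigr => r; rewrite inE => /andP[_ rQU].
have Nq1 := QU_level1 rQU; have [cr zcr] := level1_unit_exists zOm Nq1.
by rewrite /G !big_split /= !(sum_level1 zOm Nq1 (fun=> _) zcr).
Qed.


Lemma card_QU_setD_mul_le L (x : R) : L \subset QU -> 0 <= x ->
  #|QU :\: L|%:R * (#|Om|%:R * x) <= (n - #|L|)%:R * (#|Om|%:R * x).
Proof.
move=> LQU x_ge0; have [Om0|[z0 z0Om]] := set_0Vmem Om; first by rewrite Om0 cards0 !mul0r !mulr0.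
rewrite ler_wpM2r ?mulr_ge0 // ler_nat -(card_units_notin z0Om LQU).
rewrite -(card_units_in z0Om (subsetDl QU L)); apply: subset_leq_card.
by apply/subsetP => a; rewrite !inE => /andP[].
Qed.

Lemma sum_CR_move_bound_le L q : L \subset QU -> q \in QU -> q \notin L ->
  \sum_(z in Om) \sum_(a | z a \notin L) move_bound q z a
  <= 8 * (n - #|L|)%:R * (#|Om|%:R * moment_bound).
Proof.
move=> LQU qQU qL; set N := (n - #|L|)%:R; set M := #|Om|%:R * moment_bound.
have M_ge0 : 0 <= M by rewrite mulr_ge0 ?ler0n ?moment_bound_ge0.
have N_ge0 : 0 <= N by exact: ler0n.
rewrite (eq_bigr _ (fun z zOm => sum_move_bound qQU qL zOm LQU)) big_split /= big_split /=.
have T1 : \sum_(z in Om) N * (2 * dev_moment (Yobs Y z) q + \sum_(i | z i == q) unit_moment q i)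
    <= N * (3 * M).
  rewrite -mulr_sumr big_split /= -mulr_sumr ler_wpM2l //.
  have := sum_CR_dev_moment_le qQU; have := sum_CR_unit_moment_level_le qQU qQU; rewrite -/M; lra.
have T3 : \sum_(z in Om) \sum_(r in QU :\: L) (2 * dev_moment (Yobs Y z) r
    + \sum_(a | z a == r) unit_moment r a + \sum_(i | z i == q) unit_moment r i)
    <= #|QU :\: L|%:R * (4 * M).
  rewrite exchange_big /= -sum1_card natr_sum mulr_suml; apply: ler_sum => r.
  rewrite inE => /andP[_ rQU]; rewrite big_split /= big_split /= -mulr_sumr.
  have := sum_CR_dev_moment_le rQU; have := sum_CR_unit_moment_level_le rQU rQU.
  by have := sum_CR_unit_moment_level_le qQU rQU; rewrite -/M; lra.
have := sum_CR_unit_moment_notin_le LQU qQU; rewrite -/M -/N => T2.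
by have := card_QU_setD_mul_le LQU (mulr_ge0 (ler0n _ 4) moment_bound_ge0); rewrite /M in T1 T2 T3 *; lra.
Qed.


Lemma sum_move_sqdev_vhat_le L q : L \subset QU -> q \in QU -> q \notin L ->
  \sum_(z in Om) move_sqdev L q (vhat P w Y) z <= 1920 * wbar ^+ 2 * (#|Om|%:R * moment_bound).
Proof.
move=> LQU qQU qL; pose N : R := (n - #|L|)%:R; pose c := 240 * wbar ^+ 2.
have c_ge0 : 0 <= c by rewrite mulr_ge0 ?sqr_ge0.
have NV_ge0 : 0 <= N^-1 by rewrite invr_ge0 ler0n.
apply: le_trans (_ : \sum_(z in Om) N^-1 * \sum_(a | z a \notin L) c * move_bound q z a <= _).
  apply: ler_sum => z zOm; rewrite /move_sqdev ler_wpM2l //; apply: ler_sum => a _.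
  exact: sqr_vhat_move_le.
have -> : \sum_(z in Om) N^-1 * \sum_(a | z a \notin L) c * move_bound q z a
    = N^-1 * c * \sum_(z in Om) \sum_(a | z a \notin L) move_bound q z a.
  by rewrite !mulr_sumr; apply: eq_bigr => z _; rewrite -mulrA -mulr_sumr.
apply: le_trans (ler_wpM2l (mulr_ge0 NV_ge0 c_ge0) (sum_CR_move_bound_le LQU qQU qL)) _.
have NVN_le1 : N^-1 * N <= 1.
  by have [->|N0] := eqVneq N 0; [rewrite mulr0 ler01 | rewrite mulVf].
have M_ge0 : 0 <= #|Om|%:R * moment_bound by rewrite mulr_ge0 ?ler0n ?moment_bound_ge0.
have := ler_wpM2r (mulr_ge0 c_ge0 M_ge0) NVN_le1; rewrite -/N /c; lra.
Qed.

Lemma Yobs_agree z z' r : agree_on QU z z' -> r \in QU -> Yobs Y z r = Yobs Y z' r.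
Proof.
move/agree_onP => eq_zz' rQU; rewrite /Yobs; apply: eq_bigl => i.
by apply/eqP/eqP => zir; [rewrite -eq_zz' // zir rQU | rewrite eq_zz' // zir rQU orbT].
Qed.

Lemma vhat_agree z z' : agree_on QU z z' -> vhat P w Y z = vhat P w Y z'.
Proof.
move=> eq_zz'; rewrite !vhatE /vhat_of; apply: eq_bigr => r rQU.
rewrite (Yobs_agree eq_zz' rQU); congr (_ * (_ - _) ^+ 2).
by rewrite /gmean; congr (_ * _); apply: eq_bigr => t tr; rewrite (Yobs_agree eq_zz' (group_of_sub rQU tr)).
Qed.

Lemma sum_sqr_vhat_dev_le :
  \sum_(z in Om) (vhat P w Y z - Expect Om (vhat P w Y)) ^+ 2 <=
  #|QU|%:R * (1920 * wbar ^+ 2 * (#|Om|%:R * moment_bound)).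
Proof.
apply: sum_sqr_dev_le => [z z' _ _|L q LQU qQU qL]; first exact: vhat_agree.
exact: sum_move_sqdev_vhat_le.
Qed.

End VhatVariance.

Lemma Prob_dev_ge_le n Q (Om : {set assignment n Q}) (f : assignment n Q -> R) (m t : R) :
  0 < t ->
  Prob Om (fun z => t <= `|f z - m|) <= (\sum_(z in Om) (f z - m) ^+ 2) / (#|Om|%:R * t ^+ 2).
Proof.
move=> t_gt0; have t2_gt0 : 0 < t ^+ 2 by exact: exprn_gt0.
rewrite /Prob; set k := #|_|%:R.
have -> : k / #|Om|%:R = k * t ^+ 2 / (#|Om|%:R * t ^+ 2).
  by rewrite invfM mulrACA mulfV ?gt_eqF // mulr1.
apply: ler_wpM2r; first by rewrite invr_ge0 mulr_ge0 // ltW.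
exact: card_dev_ge_mul_sqr_le.
Qed.

Theorem lemmaS14 :
  exists C : R, 0 < C /\
  forall (n Q : nat) (Nq : 'I_Q -> nat) (Y : 'I_n -> 'I_Q -> R)
         (P : {set {set 'I_Q}}) (w : 'I_Q -> R) (wbar Delta zeta : R),
    (forall q, (1 <= Nq q)%N) ->
    (\sum_(q < Q) Nq q)%N = n ->
    partition P (QU Nq) ->
    (forall B, B \in P -> (2 <= #|B|)%N) ->
    (* Condition 3 *)
    (forall q : 'I_Q,
        (n%:R)^-1 * \sum_(i < n) (Y i q - Ybar Y q) ^+ 4 <= Delta ^+ 4) ->
    (* Condition 6 *)
    (forall B, B \in P -> forall q, q \in B ->
        `|Ybar Y q - Ybar_grp Y B| <= zeta) ->
    (forall q, q \in QU Nq -> `|w q| <= wbar) ->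
    forall t : R, 0 < t ->
      Prob (CR_support Nq)
        (fun z => t <= `|vhat P w Y z - Expect (CR_support Nq) (vhat P w Y)|)
      <= C * wbar ^+ 2 * (Delta ^+ 4 + Delta ^+ 2 * zeta ^+ 2)
           * (#|QU Nq|%:R) / t ^+ 2.
Proof.
exists 3840; split=> // n Q Nq Y P w wbar Delta zeta _ _ P_part P_card cond3 cond6 w_le t t_gt0.
apply: le_trans (Prob_dev_ge_le _ _ _ t_gt0) _.
set D := Delta ^+ 4 + Delta ^+ 2 * zeta ^+ 2; set X := 3840 * wbar ^+ 2 * D * #|QU Nq|%:R.
have D_ge0 : 0 <= D.
  have D4_ge0 : 0 <= Delta ^+ 4 by exact: exprn_even_ge0.
  by have := mulr_ge0 (sqr_ge0 Delta) (sqr_ge0 zeta); rewrite /D; lra.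
have moment_le : moment_bound Delta zeta <= 2 * D.
  by rewrite /moment_bound /D; have := sqr_ge0 (Delta * zeta); rewrite exprMn; lra.
have var_le : \sum_(z in CR_support Nq) (vhat P w Y z - Expect (CR_support Nq) (vhat P w Y)) ^+ 2
    <= #|@CR_support n Q Nq|%:R * X.
  apply: le_trans (sum_sqr_vhat_dev_le P_part P_card cond3 cond6 w_le) _.
  have c_ge0 : 0 <= #|QU Nq|%:R * (1920 * wbar ^+ 2 * #|@CR_support n Q Nq|%:R) :> R.
    by rewrite mulr_ge0 ?ler0n // mulr_ge0 ?ler0n // mulr_ge0 ?sqr_ge0.
  by have := ler_wpM2l c_ge0 moment_le; rewrite /X; lra.
have t2_ge0 : 0 <= t ^+ 2 := sqr_ge0 t.
have X_ge0 : 0 <= X by rewrite mulr_ge0 ?ler0n // mulr_ge0 // mulr_ge0 ?sqr_ge0.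
apply: le_trans (ler_wpM2r _ var_le) (mul_div_mul_le (ler0n _ _) X_ge0 t2_ge0).
by rewrite invr_ge0 mulr_ge0.
Qed.
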